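(* Let $(X,r)$ be a non-degenerate involutive set-theoretic solution with $|X|=n$, identified with $\{1,\dots,n\}$, and let $(\mathcal{X}^2,\tilde r)$ be the induced pair. If $(X,r)$ is of class $m$ with $m>1$, then $(\mathcal{X}^2,\tilde r)$ is also of class $m$.
   Context: A set-theoretic solution is $r:X\times X\to X\times X$, $r(x,y)=(\sigma_x(y),\gamma_y(x))$, with $r^{12}r^{23}r^{12}=r^{23}r^{12}r^{23}$; non-degenerate: all $\sigma_x,\gamma_x$ bijective; involutive: $r\circ r=\mathrm{Id}$. Induced pair: $\mathcal{X}^2=\{T_i^k:1\le i,k\le n\}$ ($n^2$ symbols), $\tilde r(T_i^k,T_j^l)=(g_i^k(T_j^l),f_j^l(T_i^k))$ where $g_i^k(T_j^l)=T_{\sigma_i(j)}^{\sigma_k(l)}$ and $f_j^l(T_i^k)=T_{\gamma_j(i)}^{\gamma_l(k)}$; this is a non-degenerate involutive solution whose maps ''$\sigma$'' are the $g_i^k$. Class: for a non-degenerate involutive solution with maps $\sigma_x$, let $D(x)=\sigma_x^{-1}(x)$; the solution is of class $m$ if $m$ is the minimal natural number such that $\sigma_x\sigma_{D(x)}\sigma_{D^2(x)}\cdots\sigma_{D^{m-1}(x)}=\mathrm{Id}$ for every element $x$. *)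

From mathcomp Require Import all_boot.
Set Implicit Arguments. Unset Strict Implicit. Unset Printing Implicit Defensive.

Section YBE.
Variable T : finType.
Implicit Types (r : T * T -> T * T).

Definition sigma r (x y : T) : T := (r (x, y)).1.
Definition gamma r (y x : T) : T := (r (x, y)).2.

Definition r12 r (t : T * T * T) : T * T * T :=
  let: (x, y, z) := t in let: (a, b) := r (x, y) in (a, b, z).
Definition r23 r (t : T * T * T) : T * T * T :=
  let: (x, y, z) := t in let: (b, c) := r (y, z) in (x, b, c).

Definition is_set_solution r : Prop :=
  forall t, r12 r (r23 r (r12 r t)) = r23 r (r12 r (r23 r t)).

Definition non_degenerate r : Prop :=
  forall x, bijective (sigma r x) /\ bijective (gamma r x).

Definition involutive_sol r : Prop := forall p, r (r p) = p.

(* D(x) = sigma_x^{-1}(x)  (well defined for non-degenerate r) *)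
Definition Dmap r (x : T) : T := odflt x [pick y | sigma r x y == x].

Definition sigma_chain r (k : nat) (x : T) : T -> T :=
  foldr (fun i f => sigma r (iter i (Dmap r) x) \o f) id (iota 0 k).

Definition class_cond r (k : nat) : Prop :=
  forall x y, sigma_chain r k x y = y.

Definition is_class r (m : nat) : Prop :=
  [/\ 0 < m, class_cond r m & forall k, 0 < k < m -> ~ class_cond r k].

End YBE.

(* induced pair on X^2 = {T_i^k} encoded as pairs (i,k) *)
Definition induced (T : finType) (r : T * T -> T * T)
  (p : (T * T) * (T * T)) : (T * T) * (T * T) :=
  let: ((i, k), (j, l)) := p in
  ((sigma r i j, sigma r k l), (gamma r j i, gamma r l k)).

(** The maps [sigma] of the induced solution act coordinatewise:
    [sigma_(i,k) (j,l) = (sigma_i j, sigma_k l)].  Hence [D(i,k) = (D i, D k)],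
    every chain [sigma_(i,k) sigma_(D(i,k)) ...] is the pair of the chains at [i]
    and at [k], and the class condition holds for the induced solution exactly
    when it holds for [r]. *)
From mathcomp Require Import all_boot.

Section InducedClass.
Variable T : finType.
Variable r : T * T -> T * T.
Hypothesis nd : non_degenerate r.

Lemma sigma_induced i k j l :
  sigma (induced r) (i, k) (j, l) = (sigma r i j, sigma r k l).
Proof. by []. Qed.

Lemma sigma_Dmap x : sigma r x (Dmap r x) = x.
Proof.
rewrite /Dmap; case: pickP => [y /eqP //|no_preimage].
have [f _ fK] := (nd x).1.
by move: (no_preimage (f x)); rewrite fK eqxx.
Qed.

Lemma Dmap_unique x y : sigma r x y = x -> y = Dmap r x.
Proof.
have [f fK _] := (nd x).1.
by move=> sxy; rewrite -(fK y) -(fK (Dmap r x)) sigma_Dmap sxy.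
Qed.

Lemma Dmap_induced i k : Dmap (induced r) (i, k) = (Dmap r i, Dmap r k).
Proof.
rewrite {1}/Dmap; case: pickP => [[j l] /eqP|no_preimage].
  by rewrite sigma_induced => -[/Dmap_unique <- /Dmap_unique <-].
by move: (no_preimage (Dmap r i, Dmap r k)); rewrite sigma_induced !sigma_Dmap eqxx.
Qed.

Lemma iter_Dmap_induced c i k :
  iter c (Dmap (induced r)) (i, k) = (iter c (Dmap r) i, iter c (Dmap r) k).
Proof. by elim: c => //= c ->; rewrite Dmap_induced. Qed.

Lemma sigma_chain_induced c i k j l :
  sigma_chain (induced r) c (i, k) (j, l) =
  (sigma_chain r c i j, sigma_chain r c k l).
Proof.
rewrite /sigma_chain; elim: (iota 0 c) => //= a s ->.
by rewrite iter_Dmap_induced sigma_induced.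
Qed.

Lemma class_cond_induced c : class_cond (induced r) c <-> class_cond r c.
Proof.
split=> cond_c.
  by move=> x y; have := cond_c (x, x) (y, y); rewrite sigma_chain_induced => -[].
by move=> [i k] [j l]; rewrite sigma_chain_induced !cond_c.
Qed.

Lemma is_class_induced m : is_class (induced r) m <-> is_class r m.
Proof.
split=> -[m_gt0 cond_m min_m]; split=> //.
- exact/class_cond_induced.
- by move=> k k_lt /class_cond_induced; exact: min_m.
- exact/class_cond_induced.
- by move=> k k_lt /class_cond_induced; exact: min_m.
Qed.

End InducedClass.

Theorem lemma3p5 (n : nat) (r : 'I_n * 'I_n -> 'I_n * 'I_n) (m : nat) :
  is_set_solution r -> non_degenerate r -> involutive_sol r ->
  1 < m -> is_class r m -> is_class (induced r) m.
Proof. by move=> _ nd _ _ /(@is_class_induced _ _ nd m). Qed.
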